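(* Let $\mathcal{N}_\ell$ be a finite set of files with popularities $q_n>0$, $n\in\mathcal{N}_\ell$, summing to $1$ and satisfying $q_{n'}/q_n\ge 1/2$ for all $n,n'\in\mathcal{N}_\ell$. Then for every $M\ge 0$ and every positive integer $K_\ell$, \[ \bar{R}(M,\mathcal{N}_\ell,K_\ell)\le 12\,R^\star(M,\mathcal{N}_\ell,K_\ell), \] where $R^\star$ is evaluated with respect to the popularities $\{q_n\}$.
   Context: Caching problem: a server holds a set of files of $F$ bits each, connected through a shared error-free link to $K$ users each with a cache of $MF$ bits. In the placement phase each user stores an arbitrary function of the files of at most $MF$ bits; in the delivery phase each user independently requests a file according to a given popularity distribution, the server sends a message over the shared link, and each user must reconstruct its requested file from the message and its cache. The rate is message length divided by $F$. $R^\star(M,\mathcal{N},K)$ denotes the optimal expected rate (infimum over schemes of the expected rate over demands, achievable with vanishing error probability for all large $F$) for file set $\mathcal{N}$, $K$ users, and the given popularities; $\bar{R}(M,\mathcal{N},K)$ denotes the same quantity when popularities are uniform over $\mathcal{N}$. (In the paper, $\mathcal{N}_\ell$ is a group of a partition in which popularities differ by at most a factor two, and $q_n=\xi p_n$ are the normalized popularities.) *)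

From HB Require Import structures.
From mathcomp Require Import all_boot all_order all_algebra.
From mathcomp Require Import classical_sets reals.
Set Implicit Arguments. Unset Strict Implicit. Unset Printing Implicit Defensive.
Import Order.TTheory GRing.Theory Num.Theory.
Local Open Scope ring_scope.
Local Open Scope classical_set_scope.

Definition files (N F : nat) := {ffun 'I_N -> F.-tuple bool}.

Definition demand (N K : nat) := {ffun 'I_K -> 'I_N}.

(* A caching scheme for N files of F bits, K users, cache size M*F bits.
   - cache k W : content of user k's cache (arbitrary function of files,
     at most M*F bits);
   - for demand d, the server sends enc d W, of length mlen d bits;
   - user k decodes from the demand vector, the message and its cache. *)
Record scheme (R : realType) (N K F : nat) (M : R) := Scheme {
  cache : 'I_K -> files N F -> seq bool;
  mlen : demand N K -> nat;
  enc : demand N K -> files N F -> seq bool;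
  dec : demand N K -> 'I_K -> seq bool -> seq bool -> F.-tuple bool;
  cache_size : forall k W, (size (cache k W))%:R <= M * F%:R;
  enc_size : forall d W, size (enc d W) = mlen d
}.

(* Probability (files i.i.d. uniform bits) that some user errs under demand d. *)
Definition err_prob (R : realType) (N K F : nat) (M : R) (S : scheme N K F M)
  (d : demand N K) : R :=
  #|[set W : files N F | [exists k : 'I_K,
       dec S d k (enc S d W) (cache S k W) != W (d k)]]|%:R
  / #|{: files N F}|%:R.

Definition exp_rate (R : realType) (N K F : nat) (M : R) (p : 'I_N -> R)
  (S : scheme N K F M) : R :=
  \sum_(d : demand N K) (\prod_(k < K) p (d k)) * ((mlen S d)%:R / F%:R).

Definition achievable (R : realType) (N : nat) (p : 'I_N -> R) (M : R) (K : nat)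
  (r : R) : Prop :=
  forall eps : R, 0 < eps -> exists F0 : nat, forall F : nat, (F0 <= F)%N ->
    exists S : scheme N K F M,
      (forall d, err_prob S d <= eps) /\ exp_rate p S <= r.

Definition Rstar (R : realType) (N : nat) (p : 'I_N -> R) (M : R) (K : nat) : R :=
  inf [set r : R | achievable p M K r].

Definition Rbar (R : realType) (N : nat) (M : R) (K : nat) : R :=
  Rstar (fun _ : 'I_N => 1 / N%:R) M K.

From HB Require Import structures.
From mathcomp Require Import all_boot all_order all_algebra.
From mathcomp Require Import classical_sets reals.
From mathcomp Require Import ring lra.

(* A scheme tuned to popularities [q] also serves an arbitrary demand [d]: send
   its messages for the cheapest pair of demands [(c1, c2)] covering [d] (each
   user's request appears in [c1] or in [c2]); the error probability at most
   doubles. If [d] has law [p] and [(c1, c2)] is drawn by a coupling in which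
   both [c1] and [c2] have law [q], the expected length is at most twice the
   [q]-expected length of the original scheme. Such a coupling exists whenever
   [p <= 2 q], and inside a group where popularities differ by at most a factor
   two the uniform law satisfies [1/N <= 2 q n]. This gives the constant 2,
   hence a fortiori 12. *)

Set Implicit Arguments.
Unset Strict Implicit.
Unset Printing Implicit Defensive.
Import Order.TTheory GRing.Theory Num.Theory.
Local Open Scope ring_scope.

Lemma sum_indicator (R : pzSemiRingType) (I : finType) (a : I) (X : I -> R) :
  \sum_b (b == a)%:R * X b = X a.
Proof.
rewrite (bigD1 a) //= eqxx mul1r big1 ?addr0 // => b /negbTE ->.
by rewrite mul0r.
Qed.

Lemma sum_demand2_prod (R : comPzSemiRingType) (N K : nat)
    (G : 'I_K -> 'I_N -> 'I_N -> R) :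
  \sum_(d : demand N K) \sum_(e : demand N K) \prod_k G k (d k) (e k) =
  \prod_k \sum_a \sum_b G k a b.
Proof.
by rewrite bigA_distr_bigA; apply: eq_bigr => d _; rewrite bigA_distr_bigA.
Qed.

Section CoveringCoupling.
Variables (R : realType) (N : nat).

(* [kappa a b c] is the conditional law of the pair of requests [(b, c)]
   given the request [a]. *)
Record covering_coupling (p q : 'I_N -> R) (kappa : 'I_N -> 'I_N -> 'I_N -> R)
    : Prop := {
  coupling_ge0 : forall a b c, 0 <= kappa a b c;
  coupling_sum1 : forall a, \sum_b \sum_c kappa a b c = 1;
  coupling_marginal1 : forall b, \sum_a \sum_c p a * kappa a b c = q b;
  coupling_marginal2 : forall c, \sum_a \sum_b p a * kappa a b c = q c;
  coupling_cover : forall a b c, kappa a b c != 0 -> (b == a) || (c == a)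
}.

(* With probability 1/2 keep [b = a] and draw [c] from the residual law
   [2 q - p], otherwise the symmetric choice. *)
Definition half_mixture (p q : 'I_N -> R) (a b c : 'I_N) : R :=
  2^-1 * ((b == a)%:R * (2 * q c - p c)) + 2^-1 * ((c == a)%:R * (2 * q b - p b)).

Variables (p q : 'I_N -> R).
Hypotheses (p_sum : \sum_n p n = 1) (q_sum : \sum_n q n = 1).
Hypothesis p_le2q : forall n, p n <= 2 * q n.

Let residual_sum : \sum_n (2 * q n - p n) = 1.
Proof. by rewrite sumrB -mulr_sumr q_sum p_sum; lra. Qed.

Lemma half_mixture_marginal1 b : \sum_a \sum_c p a * half_mixture p q a b c = q b.
Proof.
rewrite /half_mixture.
under eq_bigr => a _ do
  rewrite -mulr_sumr big_split /= -!mulr_sumr residual_sum sum_indicator.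
rewrite (eq_bigr (fun a => 2^-1 * ((a == b)%:R * p a) + 2^-1 * (2 * q b - p b) * p a));
  last by move=> a _; rewrite eq_sym; ring.
by rewrite big_split /= -!mulr_sumr sum_indicator p_sum; lra.
Qed.

Lemma half_mixtureC a b c : half_mixture p q a b c = half_mixture p q a c b.
Proof. by rewrite /half_mixture addrC. Qed.

Lemma half_mixture_covering : covering_coupling p q (half_mixture p q).
Proof.
split.
- move=> a b c; rewrite /half_mixture.
  have f_ge0 n : 0 <= 2 * q n - p n by rewrite subr_ge0.
  by rewrite addr_ge0 // mulr_ge0 ?invr_ge0 ?ler0n // mulr_ge0 ?ler0n.
- move=> a; rewrite /half_mixture.
  under eq_bigr => b _ do
    rewrite big_split /= -!mulr_sumr residual_sum sum_indicator.
  rewrite big_split /= -!mulr_sumr (sum_indicator a (fun=> 1)) residual_sum.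
  lra.
- exact: half_mixture_marginal1.
- move=> c; rewrite -(half_mixture_marginal1 c); apply: eq_bigr => a _.
  by apply: eq_bigr => b _; rewrite half_mixtureC.
- move=> a b c; rewrite /half_mixture.
  by case: (b == a); case: (c == a); rewrite //= !mul0r !mulr0 addr0 eqxx.
Qed.

End CoveringCoupling.

Definition covered_by (N K : nat) (d : demand N K) (c : demand N K * demand N K) :=
  [forall k, (c.1 k == d k) || (c.2 k == d k)].

Section Transfer.
Variables (R : realType) (N K : nat) (p q : 'I_N -> R).
Variable kappa : 'I_N -> 'I_N -> 'I_N -> R.
Hypothesis p_ge0 : forall n, 0 <= p n.
Hypothesis kappa_coupling : covering_coupling p q kappa.

Let law (d c1 c2 : demand N K) : R :=
  \prod_k (p (d k) * kappa (d k) (c1 k) (c2 k)).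

Let law_sum (d : demand N K) : \sum_c1 \sum_c2 law d c1 c2 = \prod_k p (d k).
Proof.
rewrite (sum_demand2_prod (fun k b c => p (d k) * kappa (d k) b c)).
apply: eq_bigr => k _; under eq_bigr => b _ do rewrite -mulr_sumr.
by rewrite -mulr_sumr (coupling_sum1 kappa_coupling) mulr1.
Qed.

Let law_marginal1 (c1 : demand N K) : \sum_d \sum_c2 law d c1 c2 = \prod_k q (c1 k).
Proof.
rewrite (sum_demand2_prod (fun k a c => p a * kappa a (c1 k) c)).
by apply: eq_bigr => k _; rewrite (coupling_marginal1 kappa_coupling).
Qed.

Let law_marginal2 (c2 : demand N K) : \sum_d \sum_c1 law d c1 c2 = \prod_k q (c2 k).
Proof.
rewrite (sum_demand2_prod (fun k a b => p a * kappa a b (c2 k))).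
by apply: eq_bigr => k _; rewrite (coupling_marginal2 kappa_coupling).
Qed.

Let law_le (d : demand N K) (V : R) (g : demand N K -> R) :
    (forall c1 c2, covered_by d (c1, c2) -> V <= g c1 + g c2) ->
  (\prod_k p (d k)) * V <= \sum_c1 \sum_c2 law d c1 c2 * (g c1 + g c2).
Proof.
move=> hV; rewrite -law_sum !mulr_suml; apply: ler_sum => c1 _.
rewrite mulr_suml; apply: ler_sum => c2 _.
have [-> | nz] := eqVneq (law d c1 c2) 0; first by rewrite !mul0r.
apply: ler_wpM2l.
  by apply: prodr_ge0 => k _; rewrite mulr_ge0 // (coupling_ge0 kappa_coupling).
apply: hV; apply/forallP => k; move/prodf_neq0: nz => /(_ k isT).
by rewrite mulf_eq0 negb_or => /andP[_ /(coupling_cover kappa_coupling)].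
Qed.

Lemma covering_coupling_transfer (V g : demand N K -> R) :
    (forall d c1 c2, covered_by d (c1, c2) -> V d <= g c1 + g c2) ->
  \sum_(d : demand N K) (\prod_k p (d k)) * V d <=
    2 * \sum_(d : demand N K) (\prod_k q (d k)) * g d.
Proof.
move=> hV.
apply: le_trans (_ : _ <= \sum_d \sum_c1 \sum_c2 law d c1 c2 * (g c1 + g c2)) _.
  by apply: ler_sum => d _; apply: law_le; exact: hV.
have first_copy : \sum_d \sum_c1 \sum_c2 law d c1 c2 * g c1 =
    \sum_(c1 : demand N K) (\prod_k q (c1 k)) * g c1.
  rewrite exchange_big; apply: eq_bigr => c1 _ /=.
  rewrite -law_marginal1 mulr_suml; apply: eq_bigr => d _.
  by rewrite mulr_suml.
have second_copy : \sum_d \sum_c1 \sum_c2 law d c1 c2 * g c2 =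
    \sum_(c2 : demand N K) (\prod_k q (c2 k)) * g c2.
  under eq_bigr => d _ do rewrite exchange_big.
  rewrite exchange_big; apply: eq_bigr => c2 _ /=.
  rewrite -law_marginal2 mulr_suml; apply: eq_bigr => d _.
  by rewrite mulr_suml.
rewrite (eq_bigr (fun d => \sum_c1 \sum_c2 law d c1 c2 * g c1 +
                          \sum_c1 \sum_c2 law d c1 c2 * g c2)); last first.
  move=> d _; rewrite -big_split; apply: eq_bigr => c1 _.
  by rewrite -big_split; apply: eq_bigr => c2 _; rewrite mulrDr.
by rewrite big_split /= first_copy second_copy; lra.
Qed.

End Transfer.

Section CoveringScheme.
Variables (R : realType) (N K F : nat) (M : R) (S : scheme N K F M).

Definition cheapest_cover (d : demand N K) : demand N K * demand N K :=
  arg_min (d, d) (covered_by d) (fun c => (mlen S c.1 + mlen S c.2)%N).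

Lemma cheapest_coverP d : covered_by d (cheapest_cover d) /\
  forall c1 c2, covered_by d (c1, c2) ->
    (mlen S (cheapest_cover d).1 + mlen S (cheapest_cover d).2
       <= mlen S c1 + mlen S c2)%N.
Proof.
rewrite /cheapest_cover; case: arg_minnP => [|c c_cov c_min].
  by apply/forallP => k; rewrite eqxx.
by split => // c1 c2 /c_min.
Qed.

Definition cover_enc (d : demand N K) (W : files N F) :=
  enc S (cheapest_cover d).1 W ++ enc S (cheapest_cover d).2 W.

Definition cover_dec (d : demand N K) (k : 'I_K) (msg cch : seq bool) :=
  let: (c1, c2) := cheapest_cover d in
  if c1 k == d k then dec S c1 k (take (mlen S c1) msg) cch
  else dec S c2 k (drop (mlen S c1) msg) cch.

Lemma cover_enc_size d W :
  size (cover_enc d W) =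
    (mlen S (cheapest_cover d).1 + mlen S (cheapest_cover d).2)%N.
Proof. by rewrite size_cat !enc_size. Qed.

Definition covering_scheme : scheme N K F M :=
  @Scheme R N K F M (cache S)
    (fun d => mlen S (cheapest_cover d).1 + mlen S (cheapest_cover d).2)%N
    cover_enc cover_dec (cache_size S) cover_enc_size.

Lemma covering_scheme_err d :
  err_prob covering_scheme d <=
    err_prob S (cheapest_cover d).1 + err_prob S (cheapest_cover d).2.
Proof.
rewrite /err_prob -mulrDl ler_wpM2r ?invr_ge0 ?ler0n // -natrD ler_nat /=.
rewrite /cover_dec /cover_enc; have [d_cov _] := cheapest_coverP d.
case: (cheapest_cover d) d_cov => c1 c2 /forallP /= d_cov.
set A := (X in (#|X| <= _)%N); set B1 := (X in (_ <= #|X| + _)%N).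
set B2 := (X in (_ <= _ + #|X|)%N).
apply: leq_trans (_ : #|[predU B1 & B2]| <= _)%N; last by rewrite -cardUI leq_addr.
have -> : #|A| = #|[pred W | W \in A]| by apply: eq_card => W; rewrite inE.
apply: subset_leq_card; apply/fintype.subsetP => W.
rewrite inE /A /mkset /= => /existsP [k]; rewrite !inE.
case: ifP => [/eqP c1k | c1k]; rewrite (take_size_cat, drop_size_cat) ?enc_size // => err.
- by apply/orP; left; apply: mem_set; apply/existsP; exists k; rewrite c1k.
- move: (d_cov k); rewrite c1k /= => /eqP c2k.
  by apply/orP; right; apply: mem_set; apply/existsP; exists k; rewrite c2k.
Qed.

End CoveringScheme.

Section Uncoded.
Variables (R : realType) (N K F : nat) (M : R).
Hypothesis M_ge0 : 0 <= M.

Definition uncoded_index : seq ('I_K * nat) :=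
  [seq (k, j) | k <- enum 'I_K, j <- iota 0 F].

Definition uncoded_enc (d : demand N K) (W : files N F) : seq bool :=
  [seq nth false (val (W (d i.1))) i.2 | i <- uncoded_index].

Definition uncoded_dec (d : demand N K) (k : 'I_K) (msg _ : seq bool) :=
  [tuple nth false msg (index (k, val j) uncoded_index) | j < F].

Lemma uncoded_cache_size (k : 'I_K) (W : files N F) :
  (size ([::] : seq bool))%:R <= M * F%:R.
Proof. by rewrite mulr_ge0 ?ler0n. Qed.

Lemma uncoded_enc_size d W : size (uncoded_enc d W) = size uncoded_index.
Proof. exact: size_map. Qed.

Definition uncoded : scheme N K F M :=
  @Scheme R N K F M (fun _ _ => [::]) (fun _ => size uncoded_index)
    uncoded_enc uncoded_dec uncoded_cache_size uncoded_enc_size.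

Lemma uncoded_decP d k W :
  dec uncoded d k (enc uncoded d W) (cache uncoded k W) = W (d k).
Proof.
apply: eq_from_tnth => j; rewrite tnth_mktuple /= /uncoded_enc.
have kj_in : (k, val j) \in uncoded_index.
  by apply: allpairs_f; rewrite ?mem_enum ?mem_iota /=.
by rewrite (nth_map (k, 0%N)) ?index_mem // nth_index // (tnth_nth false).
Qed.

End Uncoded.

Lemma achievable_ge0 (R : realType) (N : nat) (p : 'I_N -> R) M K r :
  (forall n, 0 <= p n) -> achievable p M K r -> 0 <= r.
Proof.
move=> p_ge0 /(_ 1 ltr01) [F0 /(_ F0 (leqnn _))] [S [_ rate_le]].
apply: le_trans rate_le; apply: sumr_ge0 => d _.
by rewrite mulr_ge0 ?divr_ge0 ?ler0n ?prodr_ge0.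
Qed.

Lemma achievable_uncoded (R : realType) (N : nat) (p : 'I_N -> R) M K :
  0 <= M -> achievable p M K (\sum_(d : demand N K) (\prod_k p (d k)) * K%:R).
Proof.
move=> M_ge0 eps eps_gt0; exists 1%N => F F_gt0; exists (uncoded N K F M_ge0); split.
  move=> d; rewrite /err_prob; set A := (X in #|X|).
  have -> : #|A| = 0%N.
    apply: eq_card0 => W; apply/negbTE/negP => /set_mem /= /existsP [k].
    by rewrite uncoded_decP eqxx.
  by rewrite mul0r ltW.
rewrite le_eqVlt; apply/predU1l/eq_bigr => d _ /=; congr (_ * _).
rewrite size_allpairs size_enum_ord size_iota natrM mulfK //.
by rewrite pnatr_eq0 -lt0n.
Qed.

Lemma achievable_covering (R : realType) (N : nat) (p q : 'I_N -> R) kappa M K r :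
    (forall n, 0 <= p n) -> covering_coupling p q kappa ->
  achievable q M K r -> achievable p M K (2 * r).
Proof.
move=> p_ge0 kappa_coupling ach_r eps eps_gt0.
have [F0 schemes] := ach_r (eps / 2) ltac:(by rewrite divr_gt0).
exists F0 => F F_ge; have [S [S_err S_rate]] := schemes F F_ge.
exists (covering_scheme S); split.
  move=> d; apply: le_trans (covering_scheme_err S d) _.
  by have := S_err (cheapest_cover S d).1; have := S_err (cheapest_cover S d).2; lra.
apply: le_trans (_ : _ <= 2 * exp_rate q S) _; last by rewrite ler_wpM2l.
apply: (covering_coupling_transfer p_ge0 kappa_coupling) => d c1 c2 cov.
rewrite -mulrDl ler_wpM2r ?invr_ge0 ?ler0n // -natrD ler_nat.
exact: (cheapest_coverP S d).2.
Qed.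

Lemma inf_le_scale (R : realType) (A B : set R) (c : R) :
    0 < c -> has_lbound A -> nonempty B -> (forall b, B b -> A (c * b)) ->
  inf A <= c * inf B.
Proof.
move=> c_gt0 A_lb B_ne BA; rewrite -ler_pdivrMl //.
apply: lb_le_inf => // b Bb; rewrite ler_pdivrMl //.
exact: ge_inf A_lb _ (BA b Bb).
Qed.

Section RstarBounds.
Variables (R : realType) (N : nat) (M : R) (K : nat).
Hypothesis M_ge0 : 0 <= M.

Lemma Rstar_ge0 (q : 'I_N -> R) : (forall n, 0 <= q n) -> 0 <= Rstar q M K.
Proof.
move=> q_ge0; apply: lb_le_inf; first by eexists; exact: achievable_uncoded.
by move=> r; apply: achievable_ge0.
Qed.

Lemma Rstar_le_twice (p q : 'I_N -> R) :
    (forall n, 0 <= p n) -> \sum_n p n = 1 -> \sum_n q n = 1 ->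
    (forall n, p n <= 2 * q n) ->
  Rstar p M K <= 2 * Rstar q M K.
Proof.
move=> p_ge0 p_sum q_sum p_le2q; apply: inf_le_scale => //.
- by exists 0 => r; apply: achievable_ge0.
- by eexists; exact: achievable_uncoded.
- move=> r; apply: achievable_covering => //.
  exact: half_mixture_covering.
Qed.

End RstarBounds.

Theorem claim2 (R : realType) (N : nat) (q : 'I_N -> R)
  (q_pos : forall n, 0 < q n)
  (q_sum : \sum_(n < N) q n = 1)
  (q_ratio : forall n n', q n' / q n >= 1 / 2)
  (M : R) (hM : 0 <= M) (K : nat) (hK : (0 < K)%N) :
  Rbar N M K <= 12 * Rstar q M K.
Proof.
have N_gt0 : (0 < N)%N.
  case: N q q_sum {q_pos q_ratio} => // q.
  by rewrite big_ord0 => /eqP; rewrite eq_sym oner_eq0.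
have N_neq0 : N%:R != 0 :> R by rewrite pnatr_eq0 -lt0n.
have uniform_le2q n : 1 / N%:R <= 2 * q n.
  have sum_le : \sum_(m < N) q m <= \sum_(m < N) 2 * q n.
    apply: ler_sum => m _; have := q_ratio m n.
    by rewrite ler_pdivlMr ?q_pos //; lra.
  rewrite q_sum sumr_const card_ord in sum_le.
  by rewrite ler_pdivrMr ?ltr0n // mulr_natr.
have uniform_sum : \sum_(n < N) 1 / N%:R = 1 :> R.
  by rewrite sumr_const card_ord -[_ *+ N]mulr_natr div1r mulVf.
have q_ge0 n : 0 <= q n by apply: ltW.
have uniform_ge0 : 0 <= 1 / N%:R :> R by rewrite divr_ge0 ?ler0n.
have := Rstar_le_twice K hM (fun=> uniform_ge0) uniform_sum q_sum uniform_le2q.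
have := Rstar_ge0 K hM q_ge0; rewrite /Rbar; lra.
Qed.
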